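(* Let $(X,\eta,\varepsilon,\tilde\mu)$ be a commutative Frobenius object in $\mathbf{Rel}$. If $\eta\cap\varepsilon \neq \emptyset$, then its partition function satisfies $Z(\Sigma_g) = T$ for all integers $g \ge 0$.
   Context: $\mathbf{Rel}$ is the symmetric monoidal category whose objects are sets, whose morphisms $X \to Y$ are relations $R \subseteq X \times Y$, composed by $S\circ R = \{(x,z) : \exists y,\ (x,y)\in R,\ (y,z)\in S\}$, with identity the diagonal, monoidal product the Cartesian product, and unit the one-point set $\{\bullet\}$. A relation $R \subseteq X\times Y$ is identified with the map $\tilde R: X \to \mathcal{P}(Y)$, $\tilde R(x) = \{y : (x,y)\in R\}$. A Frobenius object in $\mathbf{Rel}$ is a set $X$ with a unit $\eta \subseteq X$ (a relation $\{\bullet\}\to X$), a counit $\varepsilon \subseteq X$ (a relation $X \to \{\bullet\}$), and a multiplication $\mu \subseteq X\times X\times X$ (a relation $X\times X \to X$, with map $\tilde\mu$) satisfying unitality $\mu\circ(\mathbf{1}\times\eta)=\mu\circ(\eta\times\mathbf{1})=\mathbf{1}$, associativity $\mu\circ(\mathbf{1}\times\mu)=\mu\circ(\mu\times\mathbf{1})$, and nondegeneracy: there is a relation $\beta:\{\bullet\}\to X\times X$ with $(\varepsilon\times\mathbf{1})\circ(\mu\times\mathbf{1})\circ(\mathbf{1}\times\beta) = (\mathbf{1}\times\varepsilon)\circ(\mathbf{1}\times\mu)\circ(\beta\times\mathbf{1}) = \mathbf{1}$ (such $\beta$ is unique). The comultiplication is $\delta = (\mathbf{1}\times\mu)\circ(\beta\times\mathbf{1})$.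 It is commutative if $\tilde\mu(x,y)=\tilde\mu(y,x)$ for all $x,y$. The partition function on the closed orientable genus-$g$ surface is $Z(\Sigma_g) = \varepsilon\circ(\mu\circ\delta)^g\circ\eta \in \{\emptyset,\{\bullet\}\}$, with $\emptyset$ read as $F$ and $\{\bullet\}$ as $T$. *)

(* the category Rel with sets as types and relations as
   Prop-valued predicates; the one-point set is [unit]. *)


Definition hrel (A B : Type) := A -> B -> Prop.

Definition rcomp {A B C : Type} (S : hrel B C) (R : hrel A B) : hrel A C :=
  fun a c => exists b, R a b /\ S b c.

Definition rid (A : Type) : hrel A A := fun a b => a = b.

Definition rprod {A B C D : Type} (R : hrel A B) (S : hrel C D)
  : hrel (A * C) (B * D) :=
  fun p q => R (fst p) (fst q) /\ S (snd p) (snd q).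

Definition req {A B : Type} (R S : hrel A B) : Prop :=
  forall a b, R a b <-> S a b.

Definition rassoc (A B C : Type) : hrel ((A * B) * C) (A * (B * C)) :=
  fun p q => q = (fst (fst p), (snd (fst p), snd p)).
Definition rassoc_inv (A B C : Type) : hrel (A * (B * C)) ((A * B) * C) :=
  fun p q => q = ((fst p, fst (snd p)), snd (snd p)).
Definition runit_inv (A : Type) : hrel A (A * unit) := fun a p => p = (a, tt).
Definition lunit_inv (A : Type) : hrel A (unit * A) := fun a p => p = (tt, a).
Definition runit (A : Type) : hrel (A * unit) A := fun p a => a = fst p.
Definition lunit (A : Type) : hrel (unit * A) A := fun p a => a = snd p.

Section Frob.
Variables (X : Type) (eta : hrel unit X) (eps : hrel X unit)
          (mu : hrel (X * X) X) (beta : hrel unit (X * X)).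

Definition unital : Prop :=
  req (rcomp mu (rcomp (rprod (rid X) eta) (runit_inv X))) (rid X) /\
  req (rcomp mu (rcomp (rprod eta (rid X)) (lunit_inv X))) (rid X).

Definition associative : Prop :=
  req (rcomp (rcomp mu (rprod (rid X) mu)) (rassoc X X X))
      (rcomp mu (rprod mu (rid X))).

(* beta witnesses nondegeneracy (zig-zag identities) *)
Definition nondeg_witness : Prop :=
  req (rcomp (lunit X)
        (rcomp (rprod eps (rid X))
          (rcomp (rprod mu (rid X))
            (rcomp (rassoc_inv X X X)
              (rcomp (rprod (rid X) beta) (runit_inv X))))))
      (rid X) /\
  req (rcomp (runit X)
        (rcomp (rprod (rid X) eps)
          (rcomp (rprod (rid X) mu)
            (rcomp (rassoc X X X)
              (rcomp (rprod beta (rid X)) (lunit_inv X))))))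
      (rid X).


Definition comult : hrel X (X * X) :=
  rcomp (rprod (rid X) mu)
    (rcomp (rassoc X X X) (rcomp (rprod beta (rid X)) (lunit_inv X))).

Definition commutative : Prop :=
  forall x y z, mu (x, y) z <-> mu (y, x) z.

Fixpoint rpow (R : hrel X X) (n : nat) : hrel X X :=
  match n with
  | O => rid X
  | S n => rcomp R (rpow R n)
  end.

(* Z(Sigma_g) = eps o (mu o delta)^g o eta, a relation {*} -> {*};
   it is T iff it relates tt to tt. *)
Definition partition_fn (g : nat) : hrel unit unit :=
  rcomp eps (rcomp (rpow (rcomp mu comult) g) eta).

End Frob.


(* If e lies in both the unit and the counit, unitality and commutativity give
   e * e = e, and the zig-zag identities then force the copairing to contain
   (e, e).  Hence the handle operator mu o delta relates e to itself, and e is a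
   common witness for eps o (mu o delta)^g o eta at every genus g. *)

Section FrobeniusRel.
Variables (X : Type) (eta : hrel unit X) (eps : hrel X unit)
          (mu : hrel (X * X) X) (beta : hrel unit (X * X)).

Lemma mul_unit_r_exists :
  unital X eta mu -> forall x, exists u, eta tt u /\ mu (x, u) x.
Proof.
  intros [Ur _] x.
  destruct (proj2 (Ur x x) eq_refl) as [[x' u] [[p [Hp [Hx Hu]]] Hmu]].
  unfold runit_inv, rid in *; subst p; simpl in *; subst x'.
  now exists u.
Qed.

Lemma mul_unit_r_eq u x y :
  unital X eta mu -> eta tt u -> mu (x, u) y -> x = y.
Proof.
  intros [Ur _] Hu Hmu.
  apply (proj1 (Ur x y)).
  exists (x, u); split; [| exact Hmu].
  exists (x, tt); repeat split; exact Hu.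
Qed.

Lemma mul_unit_idem e :
  unital X eta mu -> commutative X mu -> eta tt e -> mu (e, e) e.
Proof.
  intros HU HC He.
  destruct (mul_unit_r_exists HU e) as [u [Hu Hmu]].
  apply HC in Hmu.
  assert (Hue : u = e) by exact (mul_unit_r_eq e u e HU He Hmu).
  now subst u.
Qed.

Lemma zigzag_l_eq a b b1 c :
  nondeg_witness X eps mu beta ->
  beta tt (b1, b) -> mu (a, b1) c -> eps c tt -> a = b.
Proof.
  intros [Z1 _] Hb Hmu He.
  apply (proj1 (Z1 a b)).
  exists (tt, b); split; [| reflexivity].
  exists (c, b); split; [| split; [exact He | reflexivity]].
  exists ((a, b1), b); split; [| split; [exact Hmu | reflexivity]].
  exists (a, (b1, b)); split; [| reflexivity].
  exists (a, tt); repeat split; exact Hb.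
Qed.

Lemma zigzag_r_exists a :
  nondeg_witness X eps mu beta ->
  exists b c, beta tt (a, b) /\ mu (b, a) c /\ eps c tt.
Proof.
  intros [_ Z2].
  destruct (proj2 (Z2 a a) eq_refl)
    as [[a' u] [[[c1 c2] [[[d1 [d2 d3]] [Hq [Hd1 Hmu]]] [Hc1 Hc2]]] Ha']].
  destruct Hq as [[[f1 f2] f3] [[[t a''] [Ht [Hb Hf3]]] Hass]].
  unfold rassoc, lunit_inv, runit, rid in *; simpl in *.
  injection Hass as -> -> ->; injection Ht as -> ->; subst; destruct u.
  now exists f2, c2.
Qed.

Lemma copairing_diag e :
  nondeg_witness X eps mu beta -> mu (e, e) e -> eps e tt -> beta tt (e, e).
Proof.
  intros HN Hee He.
  destruct (zigzag_r_exists e HN) as [b [c [Hb _]]].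
  assert (Heb : e = b) by exact (zigzag_l_eq e b e e HN Hb Hee He).
  now subst b.
Qed.

Lemma handle_refl e :
  mu (e, e) e -> beta tt (e, e) -> rcomp mu (comult X mu beta) e e.
Proof.
  intros Hee Hb.
  exists (e, e); split; [| exact Hee].
  exists (e, (e, e)); split; [| split; [reflexivity | exact Hee]].
  exists ((e, e), e); split; [| reflexivity].
  exists (tt, e); split; [reflexivity | split; [exact Hb | reflexivity]].
Qed.

End FrobeniusRel.

Lemma rpow_refl (X : Type) (R : hrel X X) x n : R x x -> rpow X R n x x.
Proof.
  intros Hx; induction n as [| n IH]; [reflexivity | now exists x].
Qed.

Theorem lemma4p2 (X : Type) (eta : hrel unit X) (eps : hrel X unit)
  (mu : hrel (X * X) X) (beta : hrel unit (X * X)) :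
  unital X eta mu -> associative X mu -> nondeg_witness X eps mu beta ->
  commutative X mu ->
  (exists x, eta tt x /\ eps x tt) ->
  forall g : nat, partition_fn X eta eps mu beta g tt tt.
Proof.
  intros HU _ HN HC [e [He_eta He_eps]] g.
  assert (Hee : mu (e, e) e) by exact (mul_unit_idem X eta mu e HU HC He_eta).
  assert (Hb : beta tt (e, e)) by exact (copairing_diag X eps mu beta e HN Hee He_eps).
  exists e; split; [| exact He_eps].
  exists e; split; [exact He_eta |].
  apply rpow_refl, handle_refl; assumption.
Qed.
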